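(* Let $\ell$ be a positive integer and $a_1,\dots,a_\ell,b,c$ positive integers, and put $\vec k_1=(a_1,\dots,a_\ell,b)$ and $\vec k_2=(a_1,\dots,a_\ell,c)$. Then $\widetilde{C}_{\vec k_1}(q,t)=\widetilde{C}_{\vec k_2}(q,t)$, where $\widetilde{C}_{\vec k}(q,t)=\sum_{\pi\in\mathcal D_{\vec k}}q^{\mathrm{area}(\pi)}t^{\mathrm{depth}(\pi)}$.
   Context: For $\vec k=(k_1,\dots,k_m)$ put $|\vec k|=\sum k_i$, $N=|\vec k|+m$. A $\vec k$-Dyck path is a word $\pi=\pi_1\cdots\pi_N$ containing the letters $S^{k_1},\dots,S^{k_m}$ exactly once each and in this order, together with $|\vec k|$ letters $W$, such that all starting ranks are nonnegative, where $r_1=0$, $r_{i+1}=r_i+k_j$ if $\pi_i=S^{k_j}$ and $r_{i+1}=r_i-1$ if $\pi_i=W$. $\mathcal D_{\vec k}$ is the set of such paths. $\mathrm{area}(\pi)=\sum_j a_j$ where $a_j$ is the starting rank of $S^{k_j}$. Filling algorithm $\eta_*$: in a tableau of $m$ top-justified columns, column $i$ having $k_i+1$ cells, place $1$ at the top of column 1; for $i=2,\dots,N$, call an entry active if it is currently the bottom entry of a column $i'$ not yet containing $k_{i'}+1$ entries; if $\pi_i=W$ place $i$ immediately below the largest active entry, otherwise place $i$ at the top of the first empty column. Ranking algorithm $\gamma_*$: column 1 gets ranks $0,\dots,k_1$ top to bottom; for $i\ge2$, if the top entry of column $i$ of $\eta_*(\pi)$ is $A+1$ and $A$ has rank $\alpha$,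 column $i$ gets ranks $\alpha,\dots,\alpha+k_i$ top to bottom. $\mathrm{depth}(\pi)$ is the sum of the first-row ranks. *)

From mathcomp Require Import all_boot all_order all_algebra.
Set Implicit Arguments. Unset Strict Implicit. Unset Printing Implicit Defensive.
Import GRing.Theory Num.Theory.

(* A vector k = (k_1,...,k_m) is a [seq nat]; indices are 0-based internally.
   A word pi in the letters {S^{k_j}, W} is a [seq bool]: [true] = an S-letter,
   [false] = W.  Since the S-letters must occur in the order S^{k_1},...,S^{k_m},
   the j-th [true] (0-based) is the letter S^{k_(j+1)}. *)

Definition Nk (k : seq nat) : nat := sumn k + size k.

Fixpoint ranks_aux (k : seq nat) (r : int) (j : nat) (w : seq bool) : seq int :=
  match w with
  | [::] => [::]
  | b :: w' => r :: ranks_aux k (if b then (r + (nth 0%N k j)%:Z)%R else (r - 1)%R)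
                              (if b then j.+1 else j) w'
  end.

Definition ranks (k : seq nat) (w : seq bool) : seq int := ranks_aux k 0%R 0 w.

Definition is_dyck (k : seq nat) (w : seq bool) : bool :=
  [&& size w == Nk k, count id w == size k & all (fun r : int => (0 <= r)%R) (ranks k w)].

Definition area (k : seq nat) (w : seq bool) : nat :=
  sumn [seq absz p.1 | p <- zip (ranks k w) w & p.2].

(* a tableau is a seq of m columns, each column a seq of entries read top to bottom *)
Definition bottom (T : seq (seq nat)) (c : nat) : nat := last 0%N (nth [::] T c).

Definition active_cols (k : seq nat) (T : seq (seq nat)) : seq nat :=
  [seq c <- iota 0 (size T) |
     (0 < size (nth [::] T c))%N && (size (nth [::] T c) < (nth 0%N k c).+1)%N].

Definition fill_step (k : seq nat) (T : seq (seq nat)) (i : nat) (b : bool)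
  : seq (seq nat) :=
  if b then
    set_nth [::] T (find (fun col : seq nat => nilp col) T) [:: i]
  else
    match active_cols k T with
    | [::] => T
    | c0 :: cs =>
        let cb := foldl (fun best c => if (bottom T best < bottom T c)%N then c else best)
                        c0 cs in
        set_nth [::] T cb (rcons (nth [::] T cb) i)
    end.

Fixpoint fill_aux (k : seq nat) (T : seq (seq nat)) (i : nat) (w : seq bool)
  : seq (seq nat) :=
  match w with
  | [::] => T
  | b :: w' => fill_aux k (fill_step k T i b) i.+1 w'
  end.

Definition fill (k : seq nat) (w : seq bool) : seq (seq nat) :=
  fill_aux k (set_nth [::] (nseq (size k) [::]) 0 [:: 1%N]) 2 (behead w).

(* rank of the top entry of each column; the entry at depth p (0-based) of
   column c has rank toprank_c + p *)
Definition top_ranks (T : seq (seq nat)) : seq nat :=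
  foldl (fun (rs : seq nat) (c : nat) =>
           if c == 0%N then rcons rs 0%N
           else
             let A := (head 0%N (nth [::] T c)).-1 in
             let c' := find (fun col : seq nat => A \in col) T in
             rcons rs (nth 0%N rs c' + index A (nth [::] T c'))%N)
        [::] (iota 0 (size T)).

Definition depth (k : seq nat) (w : seq bool) : nat := sumn (top_ranks (fill k w)).

(* tilde C_k(q,t) = sum_{pi in D_k} q^area t^depth, evaluated in an arbitrary
   commutative ring (equality for all R, q, t is equivalent to equality of the
   formal bivariate polynomials, taking R = {poly {poly int}}). *)
Definition Ctilde (R : comNzRingType) (q t : R) (k : seq nat) : R :=
  (\sum_(w : (Nk k).-tuple bool | is_dyck k w) q ^+ area k w * t ^+ depth k w)%R.

From mathcomp Require Import all_boot all_order all_algebra zify.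
Set Implicit Arguments. Unset Strict Implicit. Unset Printing Implicit Defensive.

(* Appending a final W maps D_(a,b) bijectively onto D_(a,b+1): in an
   (a,b+1)-path the last S starts at some rank r >= 0 and must be followed by
   r + b + 1 >= 1 letters W to return to rank 0, so the path ends in W.  The
   starting ranks of the S letters, hence the area, do not change.  In the
   filling, the steps up to the last S only involve the first l columns and so
   do not see the last part; after it come only W's, whose entries exceed all
   earlier ones and are appended at the bottoms of columns, so they move neither
   the column tops nor the smaller entries, which is all the ranking reads.
   Hence the depth does not change either, and by induction C~ does not depend
   on the last part at all. *)

Lemma big_tuple_rcons (R : nmodType) (T : finType) (x y : T) n
    (P : pred (seq T)) (F : seq T -> R) :
  (forall w : n.+1.-tuple T, P w -> last y w = x) ->
  (\sum_(w : n.+1.-tuple T | P w) F w =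
   \sum_(w : n.-tuple T | P (rcons w x)) F (rcons w x))%R.
Proof.
move=> P_last.
pose h (w : n.-tuple T) := [tuple of rcons w x].
pose h' (w : n.+1.-tuple T) : n.-tuple T := belast_tuple (head x w) (behead_tuple w).
have rconsK (w : n.+1.-tuple T) : last y w = x -> h (h' w) = w.
  move=> lastx; apply: val_inj; move: lastx => /=.
  by case: (val w) (size_tuple w) => [|z s] //= _ <-; rewrite -lastI.
rewrite (reindex_onto h h') => [|w /P_last/rconsK //].
apply: eq_bigl => w; case: (P _) => //=.
by apply/eqP/val_inj => /=; case: (tval w) => [|z s] //=; rewrite belast_rcons.
Qed.

Lemma rcons_nseq (T : Type) n (x : T) : rcons (nseq n x) x = nseq n.+1 x.
Proof. by elim: n => //= n ->. Qed.

Lemma foldl_mem (T : eqType) (f : T -> T -> T) x s :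
  (forall y z, f y z \in [:: y; z]) -> foldl f x s \in x :: s.
Proof.
move=> f_sel; elim: s x => [|z s IHs] x /=; first exact: mem_head.
have := IHs (f x z); have := f_sel x z; rewrite !inE.
by case/orP=> /eqP-> /orP[]->; rewrite ?orbT.
Qed.

Lemma eq_foldl (S T : Type) (f g : S -> T -> S) : f =2 g -> foldl f =2 foldl g.
Proof. by move=> eq_fg x s; elim: s x => //= y s IHs x; rewrite eq_fg IHs. Qed.

Lemma eq_find_nth (T1 T2 : Type) (x1 : T1) (x2 : T2) (p1 : pred T1) (p2 : pred T2) s1 s2 :
  size s1 = size s2 -> (forall i, p1 (nth x1 s1 i) = p2 (nth x2 s2 i)) ->
  find p1 s1 = find p2 s2.
Proof.
elim: s1 s2 => [|y s1 IHs] [|z s2] //= [size_s] eq_p.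
by rewrite (eq_p 0) (IHs s2) // => i; apply: (eq_p i.+1).
Qed.

Fixpoint end_rank (k : seq nat) (r : int) (j : nat) (w : seq bool) : int :=
  if w is b :: w' then
    end_rank k (if b then (r + (nth 0%N k j)%:Z)%R else (r - 1)%R)
                (if b then j.+1 else j) w'
  else r.

Section Ranks.
Variable k : seq nat.

Lemma size_ranks_aux r j w : size (ranks_aux k r j w) = size w.
Proof. by elim: w r j => [|x w IHw] r j //=; rewrite IHw. Qed.

Lemma ranks_aux_cat r j u v :
  ranks_aux k r j (u ++ v) =
  ranks_aux k r j u ++ ranks_aux k (end_rank k r j u) (j + count id u) v.
Proof.
elim: u r j => [|x u IHu] r j /=; first by rewrite addn0.
by rewrite IHu; case: x => //=; rewrite addnS.
Qed.

Lemma ranks_last_S p n :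
  ranks k (p ++ true :: nseq n false) =
  ranks_aux k 0 0 p ++ end_rank k 0 0 p ::
    ranks_aux k (end_rank k 0 0 p + (nth 0%N k (count id p))%:Z)%R
      (count id p).+1 (nseq n false).
Proof. by rewrite /ranks ranks_aux_cat. Qed.

Lemma end_rankE r j w :
  end_rank k r j w = (r + (sumn [seq nth 0%N k i | i <- iota j (count id w)])%:Z
                       - (count negb w)%:Z)%R.
Proof. by elim: w r j => [|[] w IHw] r j /=; rewrite ?IHw /= ?add0n; lia. Qed.

Lemma area_last_S p n :
  area k (p ++ true :: nseq n false) =
  (sumn [seq absz x.1 | x <- zip (ranks_aux k 0 0 p) p & x.2] + absz (end_rank k 0 0 p))%N.
Proof.
have no_S (S : seq int) : [seq x <- zip S (nseq n false) | x.2] = [::].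
  by elim: S n => [|r S IHS] [|n'] //=.
rewrite /area ranks_last_S zip_cat ?size_ranks_aux // filter_cat /= no_S.
by rewrite map_cat sumn_cat /= addn0.
Qed.

End Ranks.

Lemma ranks_aux_nseq_false k k' r j j' n :
  ranks_aux k r j (nseq n false) = ranks_aux k' r j' (nseq n false).
Proof. by elim: n r => [|n IHn] r //=; rewrite IHn. Qed.

Lemma eq_ranks_aux k k' r j w :
  (forall i, i < j + count id w -> nth 0 k i = nth 0 k' i) ->
  ranks_aux k r j w = ranks_aux k' r j w /\ end_rank k r j w = end_rank k' r j w.
Proof.
elim: w r j => [|[] w IHw] r j //= eq_kk'.
  have eq_w : forall i, i < j.+1 + count id w -> nth 0 k i = nth 0 k' i.
    by move=> i lt_i; apply: eq_kk'; lia.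
  by rewrite eq_kk' /=; [have [-> ->] := IHw (r + (nth 0 k' j)%:Z)%R _ eq_w | lia].
have eq_w : forall i, i < j + count id w -> nth 0 k i = nth 0 k' i.
  by move=> i lt_i; apply: eq_kk'; lia.
by have [-> ->] := IHw (r - 1)%R _ eq_w.
Qed.

Lemma split_last_S (w : seq bool) c : count id w = c.+1 ->
  exists p n, w = p ++ true :: nseq n false /\ count id p = c.
Proof.
elim/last_ind: w => [|w [] IHw] //; rewrite -cats1 count_cat /= ?addn1 ?addn0.
  by case=> cnt_w; exists w, 0; rewrite cats1.
case/IHw=> p [n [-> cnt_p]]; exists p, n.+1; split=> //.
by rewrite -catA /= cats1 rcons_nseq.
Qed.

Lemma dyck_head_S k w : 0 < size k -> is_dyck k w -> head false w.
Proof.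
move=> k_gt0 /and3P[_ /eqP cnt_w].
by case: w cnt_w => [|[] [|x w]] //= cnt_w; rewrite -cnt_w in k_gt0.
Qed.

Lemma fill_step_W_cases k T i :
  fill_step k T i false = T \/
  exists2 c, nth [::] T c != [::] &
    fill_step k T i false = set_nth [::] T c (rcons (nth [::] T c) i).
Proof.
rewrite /fill_step; case act_T: (active_cols k T) => [|c0 cs]; [by left | right].
set c := foldl _ _ _; have : c \in active_cols k T.
  by rewrite act_T; apply: foldl_mem => y z; case: ifP; rewrite !inE eqxx ?orbT.
rewrite mem_filter => /andP[/andP[col_c _] _]; exists c => //.
by rewrite -size_eq0 -lt0n.
Qed.

Lemma fill_step_eq k k' T i x :
  (forall c, nth [::] T c != [::] -> nth 0 k c = nth 0 k' c) ->
  fill_step k T i x = fill_step k' T i x.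
Proof.
move=> eq_kk'; case: x => //=; rewrite /fill_step /active_cols.
congr (match _ with [::] => _ | _ :: _ => _ end); apply: eq_filter => c /=.
have [->|col_c] := eqVneq (nth [::] T c) [::]; first by [].
by rewrite eq_kk'.
Qed.

Definition empty_from (s : nat) (T : seq (seq nat)) :=
  forall c, s <= c -> nth [::] T c = [::].

Lemma fill_step_empty_from k T i (x : bool) s :
  s + x <= size T -> empty_from s T ->
  size (fill_step k T i x) = size T /\ empty_from (s + x) (fill_step k T i x).
Proof.
case: x; rewrite ?addn0 ?addn1 => le_sT T_s; last first.
  case: (fill_step_W_cases k T i) => [->|[c col_c ->]] //.
  have lt_c : c < size T by rewrite ltnNge; apply: contra col_c => /(nth_default [::])->.
  split; first by rewrite size_set_nth; apply/maxn_idPr.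
  move=> c' le_sc'; rewrite nth_set_nth /=; have [eq_c'|_] := eqVneq c' c; last exact: T_s.
  by move: col_c; rewrite -eq_c' T_s.
have le_find : find (fun col : seq nat => nilp col) T <= s.
  by rewrite -ltnS; apply: find_ltn; rewrite (take_nth [::]) ?has_rcons ?T_s.
split; first by rewrite /fill_step size_set_nth; apply/maxn_idPr; lia.
by move=> c le_c; rewrite /fill_step nth_set_nth /= ifN_eq ?T_s //; lia.
Qed.

Lemma fill_aux_cat k T i u v :
  fill_aux k T i (u ++ v) = fill_aux k (fill_aux k T i u) (i + size u) v.
Proof. by elim: u T i => [|x u IHu] T i /=; rewrite ?addn0 // IHu addnS. Qed.

Lemma fill_aux_eq k k' T s i u :
  s + count id u <= size T -> empty_from s T ->
  (forall c, c < s + count id u -> nth 0 k c = nth 0 k' c) ->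
  fill_aux k T i u = fill_aux k' T i u.
Proof.
elim: u T s i => [|x u IHu] //= T s i le_uT T_s eq_kk'.
have [|size_T' T'_s] := @fill_step_empty_from k T i x s _ T_s; first by lia.
rewrite -(@fill_step_eq k k') => [|c col_c]; last first.
  apply/eq_kk'/(leq_trans _ (leq_addr _ _)).
  by rewrite ltnNge; apply: contra col_c => le_sc; rewrite T_s.
apply: IHu T'_s _ => [|c lt_c]; first by rewrite size_T'; lia.
by apply: eq_kk'; lia.
Qed.

Definition entries_below (M : nat) (T : seq (seq nat)) :=
  forall c, all (fun e => e < M) (nth [::] T c).

Lemma entries_below_fill_step k T i x :
  entries_below i T -> entries_below i.+1 (fill_step k T i x).
Proof.
have widen col : all (fun e => e < i) col -> all (fun e => e < i.+1) col.
  by apply: sub_all => e /ltnW.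
move=> T_lt; case: x.
  by move=> c; rewrite /fill_step nth_set_nth /=; case: ifP => _; rewrite /= ?ltnSn ?widen.
case: (fill_step_W_cases k T i) => [->|[c _ ->]] c'; first exact: widen.
by rewrite nth_set_nth /=; case: ifP => _; rewrite ?all_rcons ?ltnSn widen.
Qed.

Lemma entries_below_fill_aux k T i u :
  entries_below i T -> entries_below (i + size u) (fill_aux k T i u).
Proof.
elim: u T i => [|x u IHu] T i T_lt; first by rewrite addn0.
by rewrite /= addnS -addSn; apply/IHu/entries_below_fill_step.
Qed.

Definition col_extends (M : nat) (col0 col : seq nat) :=
  exists2 X, col = col0 ++ X & all (leq M) X /\ (col0 = [::] -> X = [::]).

Definition tableau_extends (M : nat) (T0 T : seq (seq nat)) :=
  size T = size T0 /\ forall c, col_extends M (nth [::] T0 c) (nth [::] T c).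

Lemma tableau_extends_refl M T : tableau_extends M T T.
Proof. by split=> // c; exists [::]; rewrite ?cats0. Qed.

Lemma tableau_extends_fill_W M k T0 T i :
  M <= i -> tableau_extends M T0 T -> tableau_extends M T0 (fill_step k T i false).
Proof.
move=> le_Mi [size_T ext_T]; case: (fill_step_W_cases k T i) => [->|[c col_c ->]] //.
have lt_c : c < size T by rewrite ltnNge; apply: contra col_c => /(nth_default [::])->.
split=> [|c']; first by rewrite size_set_nth -size_T; apply/maxn_idPr.
rewrite nth_set_nth /=; have [->|_] := eqVneq c' c; last exact: ext_T.
have [X T_c [X_ge X_nil]] := ext_T c.
exists (rcons X i); first by rewrite T_c rcons_cat.
split=> [|col0_nil]; first by rewrite all_rcons le_Mi.
by move: col_c; rewrite T_c col0_nil X_nil.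
Qed.

Lemma tableau_extends_fill_Ws M k T0 T i n :
  M <= i -> tableau_extends M T0 T ->
  tableau_extends M T0 (fill_aux k T i (nseq n false)).
Proof.
elim: n T i => [|n IHn] //= T i le_Mi ext_T.
by apply: IHn (tableau_extends_fill_W _ _ _); [apply: leqW | |].
Qed.

Lemma col_extends_head M col0 col : col_extends M col0 col -> head 0 col = head 0 col0.
Proof. by case=> X -> [_]; case: col0 => [/(_ erefl)->|]. Qed.

Lemma col_extends_mem M col0 col e :
  e < M -> col_extends M col0 col -> (e \in col) = (e \in col0).
Proof.
move=> lt_eM [X -> [X_ge _]]; rewrite mem_cat.
by case: (boolP (e \in X)) => [/(allP X_ge)|_]; rewrite ?orbF // leqNgt lt_eM.
Qed.

Lemma col_extends_index M col0 col e :
  e \in col0 -> col_extends M col0 col -> index e col = index e col0.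
Proof. by move=> e_in [X -> _]; rewrite index_cat e_in. Qed.

Lemma top_ranks_extends M T0 T :
  0 < M -> entries_below M T0 -> tableau_extends M T0 T -> top_ranks T = top_ranks T0.
Proof.
move=> M_gt0 T0_lt [size_T ext_T]; rewrite /top_ranks size_T.
apply: eq_foldl => rs c; case: eqP => // _; rewrite (col_extends_head (ext_T c)).
set A := (head 0 _).-1.
(* an empty column has the junk head 0, whence 0 < M *)
have lt_AM : A < M.
  by rewrite /A; have := T0_lt c; case: (nth [::] T0 c) => //= e col0 /andP[lt_eM _]; lia.
rewrite (@eq_find_nth _ _ [::] [::] _ (fun col => A \in col) T T0) // => [|c']; last first.
  exact: col_extends_mem (ext_T c').
set c' := find _ T0; have [has_A|hasN_A] := boolP (has (fun col => A \in col) T0).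
  by rewrite (col_extends_index (nth_find [::] has_A) (ext_T c')).
have -> : c' = size T0 by apply: hasNfind.
by rewrite [nth [::] T _]nth_default ?[nth [::] T0 _]nth_default ?size_T.
Qed.

Lemma top_ranks_fill_S_Ws k k' T i n n' :
  entries_below i T ->
  top_ranks (fill_aux k T i (true :: nseq n false)) =
  top_ranks (fill_aux k' T i (true :: nseq n' false)).
Proof.
move=> T_lt; set Ts := fill_step k T i true.
have Ts_lt : entries_below i.+1 Ts by apply: entries_below_fill_step.
rewrite /= !(@top_ranks_extends i.+1 Ts) //.
all: exact: tableau_extends_fill_Ws (tableau_extends_refl _ _).
Qed.

Section LastPart.
Variables (a : seq nat) (b : nat).
Local Notation k := (rcons a b).
Local Notation k' := (rcons a b.+1).

Lemma Nk_rcons_succ : Nk k' = (Nk k).+1.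
Proof. rewrite /Nk !sumn_rcons !size_rcons; lia. Qed.

Lemma nth_rcons_size (x : nat) : nth 0 (rcons a x) (size a) = x.
Proof. by rewrite nth_rcons ltnn eqxx. Qed.

Lemma eq_ranks_before_last_S p : count id p = size a ->
  ranks_aux k 0 0 p = ranks_aux k' 0 0 p /\ end_rank k 0 0 p = end_rank k' 0 0 p.
Proof.
by move=> cnt_p; apply: eq_ranks_aux => i; rewrite add0n cnt_p => lt_i; rewrite !nth_rcons lt_i.
Qed.

Lemma is_dyck_rcons_false w : is_dyck k' (rcons w false) = is_dyck k w.
Proof.
rewrite /is_dyck.
have -> : count id (rcons w false) = count id w by rewrite -cats1 count_cat addn0.
rewrite size_rcons Nk_rcons_succ eqSS !size_rcons.
have [/eqP cnt_w|] := boolP (count id w == (size a).+1); last by rewrite !andbF.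
have [p [n [-> cnt_p]]] := split_last_S cnt_w.
rewrite rcons_cat rcons_cons rcons_nseq !ranks_last_S cnt_p !nth_rcons_size.
have [<- <-] := eq_ranks_before_last_S cnt_p.
move: (end_rank k 0 0 p) => r; rewrite [ranks_aux k' _ _ _]/=.
rewrite (_ : r + b.+1 - 1 = r + b)%R; last by lia.
rewrite (ranks_aux_nseq_false k' k _ _ (size a).+1).
rewrite !all_cat /=; case: (0 <= r)%R / boolP => r_ge0; rewrite ?andbF //=.
by rewrite (_ : (0 <= r + b.+1)%R) //; lia.
Qed.

Lemma dyck_last_W w : is_dyck k' w -> last true w = false.
Proof.
move=> /and3P[/eqP size_w /eqP cnt_w ranks_w]; rewrite size_rcons in cnt_w.
have [p [[|n] [w_eq cnt_p]]] := split_last_S cnt_w; rewrite w_eq.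
  exfalso; move: ranks_w size_w; rewrite w_eq ranks_last_S all_cat /= end_rankE cnt_p.
  have -> : [seq nth 0 k' i | i <- iota 0 (size a)] = a.
    rewrite -[RHS](mkseq_nth 0) /mkseq; apply/eq_in_map => i.
    by rewrite mem_iota => /andP[_ lt_i]; rewrite nth_rcons lt_i.
  rewrite size_cat /= -(count_predC id p) (@eq_count _ (predC id) negb) //.
  rewrite cnt_p /Nk sumn_rcons size_rcons; lia.
by rewrite last_cat /=; elim: n {w_eq}.
Qed.

Lemma area_rcons_false w : count id w = (size a).+1 -> area k' (rcons w false) = area k w.
Proof.
case/split_last_S=> p [n [-> cnt_p]].
rewrite rcons_cat rcons_cons rcons_nseq !area_last_S.
by have [-> ->] := eq_ranks_before_last_S cnt_p.
Qed.

Lemma depth_rcons_false w : 0 < size a -> count id w = (size a).+1 -> head false w ->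
  depth k' (rcons w false) = depth k w.
Proof.
move=> a_gt0 /split_last_S[p [n [-> cnt_p]]].
case: p cnt_p => [|[] p'] //= cnt_p _; first by rewrite -cnt_p in a_gt0.
rewrite rcons_cat rcons_cons rcons_nseq /depth /fill !size_rcons /= !fill_aux_cat.
set T1 := [:: 1] :: _.
have T1_lt : entries_below 2 T1 by move=> [|c] //=; rewrite nth_nseq if_same.
have T1_empty : empty_from 1 T1 by move=> [|c] //= _; rewrite nth_nseq if_same.
have -> : fill_aux k' T1 2 p' = fill_aux k T1 2 p'.
  apply: (fill_aux_eq _ _ T1_empty) => [|c lt_c]; first by rewrite /= size_nseq; lia.
  by rewrite !nth_rcons (_ : c < size a) //; lia.
rewrite -[false :: nseq n false]/(nseq n.+1 false).
by congr sumn; apply/top_ranks_fill_S_Ws/entries_below_fill_aux.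
Qed.

Lemma Ctilde_rcons_succ (R : comNzRingType) (q t : R) : 0 < size a ->
  Ctilde q t k' = Ctilde q t k.
Proof.
move=> a_gt0; rewrite /Ctilde Nk_rcons_succ.
rewrite (@big_tuple_rcons _ _ false true _ (is_dyck k')
           (fun w => q ^+ area k' w * t ^+ depth k' w)%R) => [|w]; last exact: dyck_last_W.
apply: eq_big => [w|w dyck_w]; first exact: is_dyck_rcons_false.
rewrite is_dyck_rcons_false in dyck_w.
have cnt_w : count id w = (size a).+1.
  by case/and3P: dyck_w => _ /eqP->; rewrite size_rcons.
rewrite area_rcons_false // depth_rcons_false //.
by apply: dyck_head_S dyck_w; rewrite size_rcons.
Qed.

End LastPart.

Theorem proposition5p3 (R : comNzRingType) (q t : R) (a : seq nat) (b c : nat) :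
  (0 < size a)%N -> all (fun x => 0 < x)%N a -> (0 < b)%N -> (0 < c)%N ->
  Ctilde q t (rcons a b) = Ctilde q t (rcons a c).
Proof.
move=> a_gt0 _ _ _.
have Ctilde_last_0 n : Ctilde q t (rcons a n) = Ctilde q t (rcons a 0).
  by elim: n => [|n IHn] //; rewrite Ctilde_rcons_succ.
by rewrite !Ctilde_last_0.
Qed.
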